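(* Let $E$ be a countable subfield of $K$ and let $X_1,\ldots,X_m\subset R$ be open balls. Then there is a subset $\Omega$ of the first category in the metric space $X=X_1\times\cdots\times X_m$ such that for every $u=(u_1,\ldots,u_m)\in X\setminus\Omega$ the family $(\delta^iu_j)_{i\ge0,\,1\le j\le m}$ is algebraically independent over $E$.
   Context: Let $p$ be an odd prime, $R$ the unique complete discrete valuation ring with maximal ideal $pR$ and residue field an algebraic closure of $\mathbb F_p$, $K$ its fraction field; $R$ carries the $p$-adic metric, open balls are sets $b+p^NR$. $\phi$ is the unique lift of Frobenius and $\delta a=(\phi(a)-a^p)/p$. A subset of a metric space is of the first category if it is a countable union of subsets whose closures have empty interior. *)

From HB Require Import structures.
From mathcomp Require Import all_boot all_order all_algebra.
From mathcomp Require Import mpoly.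
Set Implicit Arguments. Unset Strict Implicit. Unset Printing Implicit Defensive.
Import Order.TTheory GRing.Theory Num.Theory.
Local Open Scope ring_scope.

Definition pdvd (R : comNzRingType) (p N : nat) (x : R) : Prop :=
  exists r : R, x = (p%:R) ^+ N * r.

Definition dvr_with_uniformizer (R : comUnitRingType) (p : nat) : Prop :=
  [/\ (p%:R : R) != 0, (p%:R : R) \isn't a GRing.unit &
      forall a : R, a != 0 -> exists n : nat, exists u : R,
        u \is a GRing.unit /\ a = (p%:R) ^+ n * u].

Definition padic_cauchy (R : comNzRingType) (p : nat) (a : nat -> R) : Prop :=
  forall N : nat, exists M : nat, forall m n : nat, (M <= m)%N -> (M <= n)%N ->
    pdvd p N (a m - a n).
Definition padic_lim (R : comNzRingType) (p : nat) (a : nat -> R) (l : R) : Prop :=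
  forall N : nat, exists M : nat, forall n : nat, (M <= n)%N -> pdvd p N (a n - l).
Definition padic_complete (R : comNzRingType) (p : nat) : Prop :=
  forall a : nat -> R, padic_cauchy p a -> exists l : R, padic_lim p a l.

Definition residue_alg_closed (R : comNzRingType) (p : nat) : Prop :=
  forall q : {poly R}, q \is monic -> (1 < size q)%N ->
    exists a : R, pdvd p 1 q.[a].

(* the residue field R/pR is algebraic over its prime field F_p: every residue
   class is a root of a polynomial with coefficients in F_p which is nonzero mod p *)
Definition residue_algebraic (R : comNzRingType) (p : nat) : Prop :=
  forall a : R, exists q : {poly int},
    (exists i : nat, ~~ (p%:Z %| q`_i)%Z) /\ pdvd p 1 (map_poly intr q).[a].

(* R is (the) complete DVR with maximal ideal pR and residue field an
   algebraic closure of F_p *)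
Definition is_W_Fpbar (R : idomainType) (p : nat) : Prop :=
  [/\ dvr_with_uniformizer R p, padic_complete R p,
      residue_alg_closed R p & residue_algebraic R p].

Definition frobenius_lift (R : comNzRingType) (p : nat) (phi : R -> R) : Prop :=
  forall a : R, pdvd p 1 (phi a - a ^+ p).

Definition fraction_field_of (R : idomainType) (K : fieldType) (iota : R -> K) : Prop :=
  injective iota /\ forall k : K, exists a b : R, iota b != 0 /\ k = iota a / iota b.

Definition countable_subfield (K : fieldType) (E : pred K) : Prop :=
  [/\ 0 \in E, 1 \in E,
      (forall x y, x \in E -> y \in E -> x - y \in E),
      (forall x y, x \in E -> y \in E -> x * y \in E) &
      (forall x, x \in E -> x^-1 \in E)] /\
  exists f : nat -> K, forall x, x \in E -> exists n, f n = x.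

Definition alg_indep_over (K : fieldType) (E : pred K) (I : eqType) (x : I -> K) : Prop :=
  forall (n : nat) (s : n.-tuple I), uniq s ->
    forall P : {mpoly K[n]}, (forall m, P@_m \in E) ->
      P.@[fun k : 'I_n => x (tnth s k)] = 0 -> P = 0.

Definition pt (R : Type) (m : nat) := 'I_m -> R.
Definition subset_of (R : Type) (m : nat) := pt R m -> Prop.

Definition pball (R : comNzRingType) (p m : nat) (u : pt R m) (N : nat) : subset_of R m :=
  fun v => forall j, pdvd p N (v j - u j).

Definition closure_in (R : comNzRingType) (p m : nat) (X A : subset_of R m) : subset_of R m :=
  fun u => X u /\ forall N, exists a, A a /\ pball p u N a.

Definition interior_in (R : comNzRingType) (p m : nat) (X B : subset_of R m) : subset_of R m :=
  fun u => X u /\ exists N, forall v, X v -> pball p u N v -> B v.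

Definition first_category_in (R : comNzRingType) (p m : nat) (X Om : subset_of R m) : Prop :=
  exists A : nat -> subset_of R m,
    (forall n u, A n u -> X u) /\
    (forall n u, ~ interior_in p X (closure_in p X (A n)) u) /\
    (forall u, Om u <-> exists n, A n u).

(* Write delta^i through the powers phi^k (with denominators p) and back.  A polynomial
   relation P over E among the delta^i(u_j) then becomes a nonzero polynomial relation G
   among the phi^k(u_j).  Its zero set is closed, since delta is p-adically continuous,
   and has empty interior: on the monoid of points congruent to 1 the monomials in the
   phi^k(w_j) are distinct characters (two Frobenius powers differ at a lift of a root of
   X^(p^r) - X - 1 in the residue field), so by Dedekind's independence of characters G
   cannot vanish on a ball.  E is countable, hence so is the set of such relations, and
   Omega is the union of their zero sets. *)

From HB Require Import structures.
From mathcomp Require Import all_boot all_order all_algebra.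
From mathcomp Require Import mpoly.
From mathcomp Require Import ring.
From Stdlib Require Import Classical.
Import GRing.Theory.
Local Open Scope ring_scope.
Set Implicit Arguments. Unset Strict Implicit. Unset Printing Implicit Defensive.

Section PadicDivisibility.
Variables (R : comNzRingType) (p : nat).
Local Notation pi := (p%:R : R).

Lemma pdvd0 e : pdvd p e (0 : R).
Proof. by exists 0; rewrite mulr0. Qed.

Lemma pdvdD e (x y : R) : pdvd p e x -> pdvd p e y -> pdvd p e (x + y).
Proof. by move=> [a ->] [b ->]; exists (a + b); rewrite mulrDr. Qed.

Lemma pdvdN e (x : R) : pdvd p e x -> pdvd p e (- x).
Proof. by move=> [a ->]; exists (- a); rewrite mulrN. Qed.

Lemma pdvdB e (x y : R) : pdvd p e x -> pdvd p e y -> pdvd p e (x - y).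
Proof. by move=> hx /pdvdN; apply: pdvdD. Qed.

Lemma pdvdMl e (x y : R) : pdvd p e y -> pdvd p e (x * y).
Proof. by move=> [a ->]; exists (x * a); rewrite mulrCA. Qed.

Lemma pdvdMr e (x y : R) : pdvd p e x -> pdvd p e (x * y).
Proof. by rewrite mulrC; apply: pdvdMl. Qed.

Lemma pdvd_pexp e : pdvd p e (pi ^+ e).
Proof. by exists 1; rewrite mulr1. Qed.

Lemma pdvdW e e' (x : R) : (e <= e')%N -> pdvd p e' x -> pdvd p e x.
Proof. by move=> le [a ->]; exists (pi ^+ (e' - e) * a); rewrite mulrA -exprD subnKC. Qed.

Lemma pdvd_trans e (x y z : R) :
  pdvd p e (x - y) -> pdvd p e (y - z) -> pdvd p e (x - z).
Proof. by move=> /pdvdD h /h; rewrite addrA subrK. Qed.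

Lemma pdvd_sum (I : Type) (r : seq I) (F : I -> R) e :
  (forall i, pdvd p e (F i)) -> pdvd p e (\sum_(i <- r) F i).
Proof. by move=> h; apply: (big_ind (pdvd p e)) => //; [apply: pdvd0 | apply: pdvdD]. Qed.

Lemma pdvd_prodB (I : Type) (r : seq I) (F G : I -> R) e :
  (forall i, pdvd p e (F i - G i)) ->
  pdvd p e (\prod_(i <- r) F i - \prod_(i <- r) G i).
Proof.
move=> h; apply: (big_rec2 (fun x y => pdvd p e (x - y))); first by rewrite subrr; apply: pdvd0.
move=> i x y _ hxy; rewrite -[_ * x](subrK (F i * y)) -mulrBr -addrA -mulrBl.
by apply: pdvdD; [apply: pdvdMl | apply: pdvdMr].
Qed.

Lemma pdvd_expB (x y : R) k e : pdvd p e (x - y) -> pdvd p e (x ^+ k - y ^+ k).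
Proof. by move=> h; rewrite -(subn0 k) -!prodr_const_nat; apply: pdvd_prodB. Qed.

Lemma pdvd_rmorph (f : {rmorphism R -> R}) e (x : R) : pdvd p e x -> pdvd p e (f x).
Proof. by move=> [a ->]; exists (f a); rewrite rmorphM rmorphXn rmorph_nat. Qed.

Lemma pdvd_meval N (P : {mpoly R[N]}) e (y y' : 'I_N -> R) :
  (forall o, pdvd p e (y o - y' o)) -> pdvd p e (P.@[y] - P.@[y']).
Proof.
move=> h; rewrite !mevalE -sumrB; apply: pdvd_sum => mo.
by rewrite -mulrBr; apply/pdvdMl/pdvd_prodB => i; apply: pdvd_expB.
Qed.

End PadicDivisibility.

Section DiscreteValuation.
Variables (R : idomainType) (p : nat).
Hypothesis dvrR : dvr_with_uniformizer R p.
Local Notation pi := (p%:R : R).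

Lemma pi_neq0 : pi != 0. Proof. by case: dvrR. Qed.

Lemma pdvd_cancel e k (x : R) : pdvd p (e + k) (pi ^+ e * x) -> pdvd p k x.
Proof.
move=> [a]; rewrite exprD -mulrA => /mulfI h; exists a; apply: h.
by rewrite expf_neq0 // pi_neq0.
Qed.

Lemma not_pdvd1_unit (u : R) : u \is a GRing.unit -> ~ pdvd p 1 u.
Proof.
case: dvrR => _ pi_nunit _ hu [a ha]; move: hu.
by rewrite ha expr1 unitrM (negbTE pi_nunit).
Qed.

Lemma exists_not_pdvd (x : R) : x != 0 -> exists e, ~ pdvd p e x.
Proof.
case: dvrR => _ _ /(_ x) h /h [n [u [hu ->]]]; exists n.+1 => hd.
by apply: (not_pdvd1_unit hu); apply: (@pdvd_cancel n); rewrite addn1.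
Qed.

Lemma pdvd_all_eq0 (x : R) : (forall e, pdvd p e x) -> x = 0.
Proof.
by move=> h; apply/eqP; apply: contraT => /exists_not_pdvd[e []].
Qed.

(* A prime characteristic q would make p invertible: q cannot divide p since p != 0,
   so p is a unit modulo q. *)
Lemma dvr_natr_eq0 n : (n%:R == 0 :> R) = (n == 0)%N.
Proof.
apply/idP/eqP => [n0|->//]; apply/eqP; apply: contraT; rewrite -lt0n => n_gt0.
have [q /andP[q_pr /eqP q0]] := natf0_pchar n_gt0 n0.
have q_ndvd_p : ~~ (q %| p)%N.
  by apply: contra pi_neq0 => /dvdnP[k ->]; rewrite natrM q0 mulr0.
have [c _] := Bezoutl p (prime_gt0 q_pr).
rewrite (eqP (_ : coprime q p)) ?prime_coprime // => /dvdnP[k hk].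
have := congr1 (fun n => n%:R : R) hk; rewrite /= natrD !natrM q0 mulr0 => /eqP.
rewrite addr_eq0 => /eqP c1; exfalso; case: dvrR => _ /negP + _; apply.
by apply/unitrP; exists (- c%:R); rewrite mulrN mulNr [p%:R * _]mulrC -c1.
Qed.

End DiscreteValuation.

Fixpoint phin (R : comNzRingType) (phi : {rmorphism R -> R}) (k : nat) : {rmorphism R -> R} :=
  if k is k'.+1 then (phi \o phin phi k')%function : {rmorphism R -> R}
  else idfun : {rmorphism R -> R}.

Lemma phinSr (R : comNzRingType) (phi : {rmorphism R -> R}) k (x : R) :
  phin phi k.+1 x = phin phi k (phi x).
Proof. by elim: k => //= k <-. Qed.

Lemma pdvd_frobD1 (R : comNzRingType) p (x : R) :
  prime p -> pdvd p 1 ((x + 1) ^+ p - (x ^+ p + 1)).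
Proof.
move=> p_pr; have p_gt0 := prime_gt0 p_pr.
rewrite exprDn -(big_mkord xpredT (fun i => (x ^+ (p - i) * 1 ^+ i) *+ 'C(p, i))).
rewrite big_nat_recr // big_ltn //= subnn bin0 binn subn0 !expr1n expr0 !mulr1 !mulr1n.
rewrite [x ^+ p + 1]addrC addrKA [_ - x ^+ p]addrC addKr big_seq big_mkcond.
apply: pdvd_sum => i.
case: ifP => [|_]; last exact: pdvd0.
rewrite mem_index_iota => /andP[i_gt0 i_lt_p].
have /dvdnP[c ->] : (p %| 'C(p, i))%N by rewrite prime_dvd_bin // i_gt0.
by rewrite mulrnA -mulr_natr; apply/pdvdMl; rewrite -[p%:R]expr1; apply: pdvd_pexp.
Qed.

Section FrobeniusLift.
Variables (R : idomainType) (p : nat) (phi : {rmorphism R -> R}).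
Hypotheses (p_pr : prime p) (dvrR : dvr_with_uniformizer R p)
  (resR : residue_alg_closed R p) (frobR : frobenius_lift p phi).
Local Notation phin := (phin phi).

Lemma phin_frobenius k (x : R) : pdvd p 1 (phin k x - x ^+ (p ^ k)).
Proof.
elim: k => [|k ih] /=; first by rewrite expn0 expr1 subrr; apply: pdvd0.
by rewrite expnSr exprM; apply: pdvd_trans (frobR _) _; apply: pdvd_expB.
Qed.

Lemma phi_neq0 (x : R) : x != 0 -> phi x != 0.
Proof.
case: dvrR => _ _ /[apply] -[n [u [u_unit ->]]].
rewrite rmorphM rmorphXn rmorph_nat mulf_neq0 ?expf_neq0 ?pi_neq0 //.
apply: contra_notN (not_pdvd1_unit dvrR (unitrX p u_unit)) => /eqP phiu0.
by move: (frobR u); rewrite phiu0 sub0r => /pdvdN; rewrite opprK.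
Qed.

Lemma phin_neq0 k (x : R) : x != 0 -> phin k x != 0.
Proof. by elim: k => //= k ih /ih; apply: phi_neq0. Qed.

Lemma pdvd_frobnD1 k (x : R) : pdvd p 1 ((x + 1) ^+ (p ^ k) - (x ^+ (p ^ k) + 1)).
Proof.
elim: k => [|k ih]; first by rewrite expn0 !expr1 subrr; apply: pdvd0.
rewrite expnSr !exprM; apply: pdvd_trans (pdvd_expB p ih) _.
exact: pdvd_frobD1.
Qed.

Lemma exists_residue_root r : (0 < r)%N -> exists a : R, pdvd p 1 (a ^+ (p ^ r) - (a + 1)).
Proof.
move=> r_gt0; have pr_gt1 : (1 < p ^ r)%N by rewrite -{1}(expn0 p) ltn_exp2l ?prime_gt1.
have size_lt : (size (- ('X + 1) : {poly R}) < size ('X^(p ^ r) : {poly R}))%N.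
  by rewrite size_polyN size_polyXn -polyC1 size_XaddC ltnS.
have mon : ('X^(p ^ r) - ('X + 1) : {poly R}) \is monic.
  by rewrite monicE lead_coefDl // lead_coefXn.
have [|a ha] := resR mon; last by exists a; move: ha; rewrite !hornerE.
by rewrite size_polyDl // size_polyXn ltnS ltnW.
Qed.

(* With a^(p^r) = a + 1 mod p and r = k - i, both phi^k a and phi^i a + 1 are
   congruent to (a + 1)^(p^i) modulo p. *)
Lemma phin_separates_lt i k : (i < k)%N -> exists y : R, phin i y != phin k y.
Proof.
move=> lt_ik; have /exists_residue_root[a ha] : (0 < k - i)%N by rewrite subn_gt0.
exists a; apply/eqP => phi_ik.
have : pdvd p 1 (phin k a - (phin i a + 1)).
  apply: pdvd_trans (phin_frobenius k a) _.
  rewrite -(subnK (ltnW lt_ik)) expnD exprM.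
  apply: pdvd_trans (pdvd_expB (p ^ i) ha) _; apply: pdvd_trans (pdvd_frobnD1 i a) _.
  by rewrite opprD addrACA subrr addr0 -opprB; apply/pdvdN/phin_frobenius.
rewrite -phi_ik opprD addrA subrr add0r.
move/pdvdN; rewrite opprK => h; exact: (not_pdvd1_unit dvrR (unitr1 R) h).
Qed.

Lemma phin_separates i k : i != k -> exists y : R, phin i y != phin k y.
Proof.
rewrite neq_ltn => /orP[/phin_separates_lt //|/phin_separates_lt[y hy]].
by exists y; rewrite eq_sym.
Qed.

End FrobeniusLift.

Section Dedekind.
Variables (T : Type) (K : fieldType) (U : T -> Prop) (one : T) (mul : T -> T -> T).
Hypotheses (U1 : U one) (UM : forall x y, U x -> U y -> U (mul x y)).

Lemma characters_independent (I : eqType) (chi : I -> T -> K) (r : seq I) (c : I -> K) :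
  (forall i x y, U x -> U y -> chi i (mul x y) = chi i x * chi i y) ->
  (forall i, chi i one = 1) -> uniq r ->
  (forall i j, i \in r -> j \in r -> i != j -> exists2 x, U x & chi i x != chi j x) ->
  (forall x, U x -> \sum_(i <- r) c i * chi i x = 0) ->
  forall i, i \in r -> c i = 0.
Proof.
move=> chiM chi1; elim: r c => [|i0 r IHr] c //= /andP[i0_notin_r uniq_r] sep sum0.
have sep_r i j : i \in r -> j \in r -> i != j -> exists2 x, U x & chi i x != chi j x.
  by move=> ir jr; apply: sep; rewrite inE ?ir ?jr orbT.
(* subtracting chi i0 y times the relation at x from the relation at y x kills i0 *)
have shifted y : U y -> forall i, i \in r -> c i * (chi i y - chi i0 y) = 0.
  move=> Uy; apply: (IHr _ uniq_r sep_r) => x Ux.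
  have := sum0 _ (UM Uy Ux); have := sum0 _ Ux; rewrite !big_cons.
  move=> /eqP; rewrite addrC addr_eq0 => /eqP sx /eqP; rewrite addrC addr_eq0 => /eqP syx.
  transitivity (\sum_(i <- r) c i * chi i (mul y x) - chi i0 y * \sum_(i <- r) c i * chi i x).
    by rewrite mulr_sumr -sumrB; apply: eq_bigr => i _; rewrite chiM //; ring.
  by rewrite sx syx chiM //; ring.
have c_r i : i \in r -> c i = 0.
  move=> ir; have ne : i0 != i by apply: contraNneq i0_notin_r => ->.
  have [y Uy hy] := sep i0 i (mem_head _ _) (ltac:(by rewrite inE ir orbT)) ne.
  apply/eqP; move: (shifted y Uy i ir) => /eqP.
  by rewrite mulf_eq0 subr_eq0 [chi i y == _]eq_sym (negbTE hy) orbF.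
move=> i; rewrite inE => /predU1P[->|]; last exact: c_r.
have := sum0 _ U1; rewrite big_cons chi1 mulr1 big_seq big1 ?addr0 // => j jr.
by rewrite c_r // mul0r.
Qed.

End Dedekind.

Lemma mpoly_eq0_on_monoid (K : fieldType) n (P : {mpoly K[n]})
    (U : ('I_n -> K) -> Prop) (a : 'I_n -> K) :
  U (fun _ => 1) -> (forall x y, U x -> U y -> U (fun i => x i * y i)) ->
  (forall al be : 'X_{1..n}, al != be ->
     exists2 x, U x & \prod_i x i ^+ al i != \prod_i x i ^+ be i) ->
  (forall i, a i != 0) ->
  (forall x, U x -> P.@[fun i => a i * x i] = 0) -> P = 0.
Proof.
move=> U1 UM sep a_neq0 P0.
have coef0 : forall mo, mo \in msupp P -> P@_mo * \prod_i a i ^+ mo i = 0.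
  apply: (@characters_independent _ _ U _ _ U1 UM _
    (fun (al : 'X_{1..n}) (x : 'I_n -> K) => \prod_i x i ^+ al i) (msupp P)
    (fun mo => P@_mo * \prod_i a i ^+ mo i)).
  - by move=> al x y _ _; rewrite -big_split; apply: eq_bigr => i _; rewrite exprMn.
  - by move=> al; apply: big1 => i _; rewrite expr1n.
  - exact: msupp_uniq.
  - by move=> al be _ _; apply: sep.
  - move=> x Ux; rewrite -[RHS](P0 x Ux) mevalE; apply: eq_bigr => mo' _.
    by rewrite -mulrA -big_split; congr (_ * _); apply: eq_bigr => i _; rewrite exprMn.
apply/eqP; rewrite -msupp_eq0; case E: (msupp P) => [//|mo s].
have mo_in : mo \in msupp P by rewrite E mem_head.
have /eqP := coef0 mo mo_in; rewrite mulf_eq0 mcoeff_eq0 mo_in /=.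
by rewrite prodf_seq_eq0 => /hasP[i _]; rewrite expf_eq0 (negbTE (a_neq0 i)) andbF.
Qed.

Lemma natr_inj_char0 (S : pzRingType) :
  (forall n, (n%:R == 0 :> S) = (n == 0)%N) -> injective (fun n : nat => n%:R : S).
Proof.
move=> char0 a b; wlog le_ab : a b / (a <= b)%N.
  by move=> wlog_le; case: (leqP a b) => [/wlog_le//|/ltnW/wlog_le h /esym/h].
by move=> /= ab; apply/eqP; rewrite eqn_leq le_ab /= -subn_eq0 -char0 natrB // ab subrr.
Qed.

Lemma exists_mnm_neq n (al be : 'X_{1..n}) : al != be -> exists k, al k != be k.
Proof.
move=> /eqP ne; apply/existsP; apply: contra_notT ne => /existsPn h.
by apply/mnmP => k; apply/eqP/negPn.
Qed.

Lemma monomials_separate (K : fieldType) n (al be : 'X_{1..n}) :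
  (forall k, (k%:R == 0 :> K) = (k == 0)%N) -> al != be ->
  exists2 x : 'I_n -> K, True & \prod_i x i ^+ al i != \prod_i x i ^+ be i.
Proof.
move=> char0 /exists_mnm_neq[k0 hk0].
exists (fun i => if i == k0 then 2 else 1) => //.
have mono ga : \prod_i (if i == k0 then 2 else 1 : K) ^+ ga i = (2 ^ ga k0)%:R.
  rewrite (bigD1 k0) //= eqxx big1 ?mulr1 ?natrX // => i /negbTE ->.
  by rewrite expr1n.
by rewrite !mono (inj_eq (natr_inj_char0 char0)) eqn_exp2l.
Qed.

(* [delta_poly ip i y] expresses delta^i x through y k = phi^k x, and
   [phi_poly k w] expresses phi^k x through w l = delta^l x; here ip = 1/p. *)
Fixpoint delta_poly (S : comPzRingType) (p : nat) (ip : S) (i : nat) (y : nat -> S) : S :=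
  if i is i'.+1 then ip * (delta_poly p ip i' (fun k => y k.+1) - delta_poly p ip i' y ^+ p)
  else y 0%N.

Fixpoint phi_poly (S : comPzRingType) (p : nat) (k : nat) (w : nat -> S) : S :=
  if k is k'.+1 then phi_poly p k' (fun l => w l ^+ p + p%:R * w l.+1) else w 0%N.

Lemma eq_delta_poly (S : comPzRingType) p (ip : S) i (y y' : nat -> S) :
  (forall k, (k <= i)%N -> y k = y' k) -> delta_poly p ip i y = delta_poly p ip i y'.
Proof.
elim: i y y' => [|i IHi] y y' eq_y /=; first exact: eq_y.
rewrite (IHi y y') ?(IHi (fun k => y k.+1) (fun k => y' k.+1)) // => k le_ki.
  exact: eq_y.
exact/eq_y/leqW.
Qed.

Lemma rmorph_delta_poly (S S' : comPzRingType) (f : {rmorphism S -> S'}) p (ip : S) i y :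
  f (delta_poly p ip i y) = delta_poly p (f ip) i (fun k => f (y k)).
Proof. by elim: i y => [|i IHi] y //=; rewrite rmorphM rmorphB rmorphXn !IHi. Qed.

Lemma delta_poly_phi_poly (S : comPzRingType) p (ip : S) i w :
  ip * p%:R = 1 -> delta_poly p ip i (fun k => phi_poly p k w) = w i.
Proof.
move=> ipK; elim: i w => [|i IHi] w //=.
by rewrite (IHi (fun l => w l ^+ p + p%:R * w l.+1)) IHi addrAC subrr add0r mulrA ipK mul1r.
Qed.

Section PhiVariables.
Variable m : nat.

Definition phi_vars (I : nat) : seq (nat * 'I_m) :=
  [seq (i, j) | i <- iota 0 I.+1, j <- enum 'I_m].

Lemma phi_vars_uniq I : uniq (phi_vars I).
Proof.
by apply: allpairs_uniq; rewrite ?iota_uniq ?enum_uniq // => -[a b] [c d] _ _ [-> ->].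
Qed.

Lemma mem_phi_vars I i j : ((i, j) \in phi_vars I) = (i <= I)%N.
Proof.
apply/allpairsP/idP => [[[a b] [ha _ [-> _]]]|le_iI].
  by move: ha; rewrite mem_iota ltnS.
by exists (i, j); rewrite mem_iota ltnS le_iI mem_enum.
Qed.

Definition phi_var (K : fieldType) I (ij : nat * 'I_m) : {mpoly K[size (phi_vars I)]} :=
  if insub (index ij (phi_vars I)) is Some o then 'X_o else 0.

Lemma meval_phi_var (K : fieldType) I (F : nat * 'I_m -> K) ij : ij \in phi_vars I ->
  (phi_var K I ij).@[fun o => F (tnth (in_tuple (phi_vars I)) o)] = F ij.
Proof.
move=> ij_in; have lt_ij : (index ij (phi_vars I) < size (phi_vars I))%N by rewrite index_mem.
by rewrite /phi_var insubT mevalXU (tnth_nth ij) /= nth_index.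
Qed.

End PhiVariables.

Lemma leq_jet_order m n (s : n.-tuple (nat * 'I_m)) k : ((tnth s k).1 <= \max_(x <- s) x.1)%N.
Proof. exact: (@leq_bigmax_seq _ _ _ (fun x => x.1)) (mem_tnth _ _) _. Qed.

Section Jets.
Variables (p : nat) (R : idomainType) (K : fieldType) (iota : {rmorphism R -> K})
  (phi : {rmorphism R -> R}) (delta : R -> R) (m : nat).
Hypotheses (dvrR : dvr_with_uniformizer R p) (iota_inj : injective iota)
  (deltaE : forall a, p%:R * delta a = phi a - a ^+ p).

Definition delta_jet n (s : n.-tuple (nat * 'I_m)) (v : 'I_m -> R) : 'I_n -> K :=
  fun k => iota (iter (tnth s k).1 delta (v (tnth s k).2)).

Definition phi_jet n (s : n.-tuple (nat * 'I_m)) (v : 'I_m -> R) : 'I_n -> K :=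
  fun k => iota (phin phi (tnth s k).1 (v (tnth s k).2)).

Lemma natK_eq0 n : (n%:R == 0 :> K) = (n == 0)%N.
Proof. by rewrite -(rmorph_nat iota) -(rmorph0 iota) (inj_eq iota_inj) (dvr_natr_eq0 dvrR). Qed.

Lemma pK_neq0 : (p%:R : K) != 0.
Proof. by rewrite -(rmorph_nat iota) -(rmorph0 iota) (inj_eq iota_inj) (pi_neq0 dvrR). Qed.

Lemma delta_phi x : delta (phi x) = phi (delta x).
Proof.
apply: (mulfI (pi_neq0 dvrR)); rewrite deltaE -[in RHS](rmorph_nat phi) -rmorphM.
by rewrite deltaE rmorphB rmorphXn.
Qed.

Lemma iota_iter_delta i x :
  iota (iter i delta x) = delta_poly p (p%:R)^-1 i (fun k => iota (phin phi k x)).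
Proof.
elim: i x => [|i IHi] x //=; rewrite -IHi.
have -> : delta_poly p (p%:R)^-1 i (fun k => iota (phin phi k.+1 x)) =
          iota (iter i delta (phi x)).
  by rewrite IHi; apply: eq_delta_poly => k _; rewrite phinSr.
rewrite -rmorphXn -rmorphB.
have -> : iter i delta (phi x) = phi (iter i delta x).
  by elim: i {IHi} => //= i ->; rewrite delta_phi.
by rewrite -deltaE rmorphM rmorph_nat mulrA mulVf ?pK_neq0 ?mul1r.
Qed.

Lemma exists_phi_jet_poly n (s : n.-tuple (nat * 'I_m)) (Q : {mpoly K[n]}) :
  exists N (s' : N.-tuple (nat * 'I_m)) (G : {mpoly K[N]}),
    [/\ uniq s', forall v, Q.@[delta_jet s v] = G.@[phi_jet s' v] &
         (uniq s -> Q != 0 -> G != 0)].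
Proof.
pose I := \max_(x <- s) x.1; pose vars := phi_vars m I.
have l_in k l : (l <= (tnth s k).1)%N -> (l, (tnth s k).2) \in vars.
  by move=> le_l; rewrite mem_phi_vars (leq_trans le_l) ?leq_jet_order.
pose G := Q \mPo [tuple delta_poly p ((p%:R)^-1)%:MP (tnth s k).1
                           (fun l => phi_var K I (l, (tnth s k).2)) | k < n].
have evalG (F : nat * 'I_m -> K) : G.@[fun o => F (tnth (in_tuple vars) o)] =
    Q.@[fun k => delta_poly p (p%:R)^-1 (tnth s k).1 (fun l => F (l, (tnth s k).2))].
  rewrite comp_mpoly_meval; apply: meval_eq => k.
  rewrite tnth_mktuple rmorph_delta_poly /= mevalC.
  by apply: eq_delta_poly => l le_l; rewrite meval_phi_var ?l_in.
exists _, (in_tuple vars), G; split; first exact: phi_vars_uniq.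
  move=> v; rewrite (evalG (fun ij => iota (phin phi ij.1 (v ij.2)))).
  by apply: meval_eq => k; rewrite /delta_jet iota_iter_delta.
move=> uniq_s; apply: contra_neq => G0.
apply: (@mpoly_eq0_on_monoid _ _ _ (fun _ => True) (fun _ => 1)) => // [al be|_|x _].
- exact: monomials_separate natK_eq0.
- exact: oner_neq0.
(* evaluate G at the phi-values that [phi_poly] computes from the delta-values x *)
pose w j i := if insub (index (i, j) s) is Some k then x k else 0.
have := evalG (fun ij => phi_poly p ij.1 (w ij.2)); rewrite G0 meval0 => ->.
apply: meval_eq => k; rewrite /= mul1r delta_poly_phi_poly ?mulVf ?pK_neq0 //.
have : (index (tnth s k) s < size s)%N by rewrite index_mem mem_tnth.
rewrite size_tuple => lt_k.
rewrite /w -surjective_pairing insubT; congr x; apply: val_inj.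
by rewrite /= (tnth_nth (tnth s k)) index_uniq ?size_tuple.
Qed.

End Jets.

Lemma expand_prod_1add (S : comPzRingType) (I : Type) (r : seq I) (q : S) (e : I -> nat) b :
  exists t, \prod_(i <- r) (1 + q * b i) ^+ e i =
            1 + q * \sum_(i <- r) (e i)%:R * b i + q ^+ 2 * t.
Proof.
have expand1 (c : S) k : exists t, (1 + q * c) ^+ k = 1 + q * (k%:R * c) + q ^+ 2 * t.
  elim: k => [|k [t IHk]]; first by exists 0; rewrite expr0 mul0r !mulr0 !addr0.
  by exists (k%:R * c ^+ 2 + t + t * q * c); rewrite exprS IHk -natr1; ring.
apply: (big_rec2 (fun P S => exists t, P = 1 + q * S + q ^+ 2 * t)).
  by exists 0; rewrite !mulr0 !addr0.
move=> i P T _ [t ->]; have [t1 ->] := expand1 (b i) (e i).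
exists ((e i)%:R * b i * T + t1 + t + q * ((e i)%:R * b i * t + t1 * T) + q ^+ 2 * t1 * t).
ring.
Qed.

(* Expanding both products to first order in q = p^L shows that the linear parts differ
   by a multiple of q, for arbitrarily large L. *)
Lemma sum_eq_of_prod_1add_eq (R : idomainType) p (I : Type) (r : seq I) (e1 e2 : I -> nat)
    (b : I -> R) L0 :
  dvr_with_uniformizer R p ->
  (forall L, (L0 <= L)%N -> \prod_(i <- r) (1 + p%:R ^+ L * b i) ^+ e1 i =
                            \prod_(i <- r) (1 + p%:R ^+ L * b i) ^+ e2 i) ->
  \sum_(i <- r) (e1 i)%:R * b i = \sum_(i <- r) (e2 i)%:R * b i.
Proof.
move=> dvrR prod_eq; apply/eqP; rewrite -subr_eq0; apply/eqP/(pdvd_all_eq0 dvrR) => e.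
pose q := p%:R ^+ (e + L0) : R.
have q_neq0 : q != 0 by rewrite expf_neq0 ?(pi_neq0 dvrR).
have := prod_eq (e + L0)%N (leq_addl _ _).
have [t1 ->] := expand_prod_1add r q e1 b; have [t2 ->] := expand_prod_1add r q e2 b.
move=> /eqP; rewrite -subr_eq0 => /eqP eq12.
have -> : \sum_(i <- r) (e1 i)%:R * b i - \sum_(i <- r) (e2 i)%:R * b i = q * (t2 - t1).
  by apply: (mulfI q_neq0); apply/eqP; rewrite -subr_eq0 -[X in _ == X]eq12; apply/eqP; ring.
by apply/pdvdMr/(pdvdW (leq_addr L0 e))/pdvd_pexp.
Qed.

Section PhiJetDensity.
Variables (p : nat) (R : idomainType) (K : fieldType) (iota : {rmorphism R -> K})
  (phi : {rmorphism R -> R}) (m : nat).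
Hypotheses (p_pr : prime p) (dvrR : dvr_with_uniformizer R p)
  (resR : residue_alg_closed R p) (frobR : frobenius_lift p phi)
  (iota_inj : injective iota).
Local Notation pi := (p%:R : R).
Local Notation phi_jet := (phi_jet iota phi).

Lemma phin_independent (I : eqType) (r : seq I) (idx : I -> nat) (c : I -> K) :
  uniq r -> {in r &, injective idx} ->
  (forall y, \sum_(i <- r) c i * iota (phin phi (idx i) y) = 0) ->
  forall i, i \in r -> c i = 0.
Proof.
move=> uniq_r idx_inj sum0.
apply: (@characters_independent R K (fun _ => True) 1 *%R _ _ _
          (fun i y => iota (phin phi (idx i) y)) r c) => //.
- by move=> i x y _ _; rewrite !rmorphM.
- by move=> i; rewrite !rmorph1.
- move=> i j ir jr ne_ij; have ne_idx : idx i != idx j.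
    by apply: contraNneq ne_ij => /idx_inj->.
  have [y hy] := phin_separates p_pr dvrR resR frobR ne_idx.
  by exists y; rewrite // (inj_eq iota_inj).
Qed.

Definition phi_jet_along N (s : N.-tuple (nat * 'I_m)) j0 (y : R) : 'I_N -> R :=
  fun o => if (tnth s o).2 == j0 then phin phi (tnth s o).1 y else 0.

(* Perturb coordinate j0 of the point 1 by p^L' y and compare terms of order p^L'. *)
Lemma monomial_linear_parts_eq N (s : N.-tuple (nat * 'I_m)) L (al be : 'X_{1..N}) :
  (forall w, pball p (fun=> 1) L w ->
     \prod_o phi_jet s w o ^+ al o = \prod_o phi_jet s w o ^+ be o) ->
  forall j0 y, \sum_o (al o)%:R * phi_jet_along s j0 y o =
               \sum_o (be o)%:R * phi_jet_along s j0 y o.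
Proof.
move=> mono_eq j0 y; apply: (sum_eq_of_prod_1add_eq (L0 := L) dvrR) => L' le_L.
pose w j := if j == j0 then 1 + pi ^+ L' * y else 1.
have w1 : pball p (fun=> 1) L w.
  move=> j; rewrite /w; case: eqP => _; last by rewrite subrr; apply: pdvd0.
  by rewrite addrC addKr; apply/pdvdMr/(pdvdW le_L)/pdvd_pexp.
have mono_w (ga : 'X_{1..N}) : \prod_o phi_jet s w o ^+ ga o =
    iota (\prod_o (1 + pi ^+ L' * phi_jet_along s j0 y o) ^+ ga o).
  rewrite rmorph_prod; apply: eq_bigr => o _; rewrite rmorphXn /phi_jet /w /phi_jet_along.
  case: eqP => _; rewrite ?rmorphD ?rmorphM ?rmorphXn ?rmorph_nat ?rmorph1 //.
  by rewrite rmorph0 !mulr0 addr0.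
by move/mono_eq: w1; rewrite !mono_w => /iota_inj.
Qed.

Lemma phi_jet_monomials_separate N (s : N.-tuple (nat * 'I_m)) L (al be : 'X_{1..N}) :
  uniq s -> al != be ->
  exists2 w, pball p (fun=> 1) L w &
    \prod_o phi_jet s w o ^+ al o != \prod_o phi_jet s w o ^+ be o.
Proof.
move=> /tuple_uniqP tnth_inj /exists_mnm_neq[k0 al_be_k0]; apply: NNPP => no_w.
have /monomial_linear_parts_eq lin_eq : forall w, pball p (fun=> 1) L w ->
    \prod_o phi_jet s w o ^+ al o = \prod_o phi_jet s w o ^+ be o.
  by move=> w w1; apply/eqP/negPn/negP => ne; apply: no_w; exists w.
set j0 := (tnth s k0).2; pose r := [seq o <- index_enum 'I_N | (tnth s o).2 == j0].
have : ((al k0)%:R - (be k0)%:R : K) = 0.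
  apply: (@phin_independent _ r (fun o => (tnth s o).1) (fun o => (al o)%:R - (be o)%:R)).
  - by rewrite filter_uniq ?index_enum_uniq.
  - move=> o o'; rewrite !mem_filter => /andP[/eqP j_o _] /andP[/eqP j_o' _] idx_eq.
    apply: tnth_inj; rewrite [tnth s o]surjective_pairing [tnth s o']surjective_pairing.
    by rewrite idx_eq j_o j_o'.
  - move=> y; rewrite big_filter big_mkcond -[RHS](rmorph0 iota).
    rewrite -(subrr (\sum_o (al o)%:R * phi_jet_along s j0 y o)) {2}lin_eq.
    rewrite -sumrB rmorph_sum; apply: eq_bigr => o _.
    rewrite /phi_jet_along; case: eqP => _; last by rewrite !mulr0 subrr rmorph0.
    by rewrite -mulrBl rmorphM rmorphB !rmorph_nat.
  - by rewrite mem_filter eqxx mem_index_enum.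
move/eqP; rewrite subr_eq0 (inj_eq (natr_inj_char0 (natK_eq0 dvrR iota_inj))).
exact/negP.
Qed.

(* The multiplicative monoid of points congruent to 1 acts on any ball, and on it the
   monomials in the phi-jet are distinct characters. *)
Lemma phi_jet_poly_nonzero_near N (s : N.-tuple (nat * 'I_m)) (G : {mpoly K[N]}) :
  uniq s -> G != 0 ->
  forall (u : 'I_m -> R) L, exists v, pball p u L v /\ G.@[phi_jet s v] != 0.
Proof.
move=> uniq_s G_neq0 u L; apply: NNPP => no_v.
have G0 v : pball p u L v -> G.@[phi_jet s v] = 0.
  by move=> uv; apply/eqP/negPn/negP => ne; apply: no_v; exists v.
pose v0 j := if u j == 0 then pi ^+ L else u j.
have v0_u : pball p u L v0.
  move=> j; rewrite /v0; case: eqP => [->|_]; rewrite ?subr0 ?subrr.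
    exact: pdvd_pexp.
  exact: pdvd0.
have v0_neq0 j : v0 j != 0.
  by rewrite /v0; case: ifP => [_|/negbT //]; rewrite expf_neq0 ?(pi_neq0 dvrR).
move/eqP: G_neq0; apply.
apply: (@mpoly_eq0_on_monoid K N G
  (fun z => exists2 w, pball p (fun=> 1) L w & z =1 phi_jet s w) (phi_jet s v0)).
- by exists (fun=> 1) => [j|o]; [rewrite subrr; apply: pdvd0 | rewrite /phi_jet !rmorph1].
- move=> x y [w1 w1_1 ex] [w2 w2_1 ey]; exists (fun j => w1 j * w2 j) => [j|o].
    have -> : w1 j * w2 j - 1 = (w1 j - 1) * w2 j + (w2 j - 1) by ring.
    exact/pdvdD/w2_1/pdvdMr/w1_1.
  by rewrite ex ey /phi_jet !rmorphM.
- move=> al be /(phi_jet_monomials_separate L uniq_s)[w w_1 ne].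
  by exists (phi_jet s w) => //; exists w.
- by move=> o; rewrite -(rmorph0 iota) (inj_eq iota_inj) (phin_neq0 dvrR frobR).
move=> x [w w_1 ex]; rewrite -(G0 (fun j => v0 j * w j)).
  by apply: meval_eq => o; rewrite ex /phi_jet !rmorphM.
move=> j; have -> : v0 j * w j - u j = v0 j * (w j - 1) + (v0 j - u j) by ring.
exact/pdvdD/v0_u/pdvdMl/w_1.
Qed.

End PhiJetDensity.

Lemma clear_denominators (R : idomainType) (K : fieldType) (iota : {rmorphism R -> K})
    n (Q : {mpoly K[n]}) :
  fraction_field_of iota ->
  exists2 d : R, d != 0 & exists Q' : {mpoly R[n]},
    forall z : 'I_n -> R, iota d * Q.@[fun k => iota (z k)] = iota Q'.@[z].
Proof.
move=> [iota_inj frac]; elim/mpolyind: Q => [|c mo Q _ _ [d d_neq0 [Q' hQ']]].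
  by exists 1; [exact: oner_neq0 | exists 0 => z; rewrite !meval0 mulr0 rmorph0].
have [a [b [b_neq0 ->]]] := frac c.
exists (b * d); first by rewrite mulf_neq0 // -(inj_eq iota_inj) rmorph0.
exists ((a * d) *: 'X_[mo] + b *: Q') => z.
rewrite !mevalD !mevalZ !mevalX !rmorphD !rmorphM -hQ' rmorph_prod.
rewrite [in RHS](eq_bigr (fun i => iota (z i) ^+ mo i)) => [|i _]; last exact: rmorphXn.
by field.
Qed.

Section DeltaJetContinuity.
Variables (p : nat) (R : idomainType) (K : fieldType) (iota : {rmorphism R -> K})
  (phi : {rmorphism R -> R}) (delta : R -> R) (m : nat).
Hypotheses (dvrR : dvr_with_uniformizer R p) (fracK : fraction_field_of iota)
  (deltaE : forall a, p%:R * delta a = phi a - a ^+ p).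
Local Notation delta_jet := (delta_jet iota delta).

Lemma pdvd_deltaB e (x y : R) : pdvd p e.+1 (x - y) -> pdvd p e (delta x - delta y).
Proof.
move=> xy; apply: (@pdvd_cancel _ _ dvrR 1); rewrite expr1 mulrBr !deltaE.
have -> : phi x - x ^+ p - (phi y - y ^+ p) = phi (x - y) - (x ^+ p - y ^+ p).
  by rewrite rmorphB; ring.
by rewrite add1n; apply/pdvdB/pdvd_expB => //; apply: pdvd_rmorph.
Qed.

Lemma pdvd_iter_deltaB i e (x y : R) :
  pdvd p (e + i) (x - y) -> pdvd p e (iter i delta x - iter i delta y).
Proof. by elim: i e => [|i IHi] e; rewrite ?addn0 // addnS -addSn => /IHi /pdvd_deltaB. Qed.

Lemma delta_jet_poly_nonzero_open n (s : n.-tuple (nat * 'I_m)) (Q : {mpoly K[n]}) v :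
  Q.@[delta_jet s v] != 0 -> exists e, forall w, pball p v e w -> Q.@[delta_jet s w] != 0.
Proof.
have [d d_neq0 [Q' hQ']] := clear_denominators Q fracK.
pose z v k := iter (tnth s k).1 delta (v (tnth s k).2).
have iotaQ' w : iota Q'.@[z w] = iota d * Q.@[delta_jet s w] by rewrite hQ'.
have iota_neq0 x : (iota x != 0) = (x != 0) by rewrite -(rmorph0 iota) (inj_eq fracK.1).
move=> Qv_neq0; have /(exists_not_pdvd dvrR)[e0 not_e0] : Q'.@[z v] != 0.
  by rewrite -iota_neq0 iotaQ' mulf_neq0 ?iota_neq0.
exists (e0 + \max_(x <- s) x.1)%N => w vw; apply: contra_notN not_e0 => /eqP Qw0.
have Q'w0 : Q'.@[z w] = 0 by apply: fracK.1; rewrite iotaQ' Qw0 mulr0 rmorph0.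
suff : pdvd p e0 (Q'.@[z w] - Q'.@[z v]) by rewrite Q'w0 sub0r => /pdvdN; rewrite opprK.
apply: pdvd_meval => k.
by apply/pdvd_iter_deltaB/(pdvdW _ (vw _)); rewrite leq_add2l leq_jet_order.
Qed.

End DeltaJetContinuity.

Lemma pball_refl (R : comNzRingType) p m (u : pt R m) L : pball p u L u.
Proof. by move=> j; rewrite subrr; apply: pdvd0. Qed.

Lemma interior_closure_empty (R : comNzRingType) p m (X Z : subset_of R m) :
  (forall u, X u -> exists L, forall v, pball p u L v -> X v) ->
  (forall u L, exists v, pball p u L v /\ ~ Z v) ->
  (forall v, ~ Z v -> exists e, forall w, pball p v e w -> ~ Z w) ->
  forall u, ~ interior_in p X (closure_in p X (fun v => X v /\ Z v)) u.
Proof.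
move=> X_open Zc_dense Zc_open u [Xu [N int_u]]; have [L0 X_L0] := X_open u Xu.
have [v [uv not_Zv]] := Zc_dense u (maxn N L0).
have Xv : X v := X_L0 v (fun j => pdvdW (leq_maxr N L0) (uv j)).
have [_ cl_v] := int_u v Xv (fun j => pdvdW (leq_maxl N L0) (uv j)).
have [e Zc_e] := Zc_open v not_Zv.
by have [a [[_ Za] va]] := cl_v e; apply: Zc_e va Za.
Qed.

Lemma box_open (R : comNzRingType) p m (b : pt R m) (Nb : 'I_m -> nat) u :
  (forall j, pdvd p (Nb j) (u j - b j)) ->
  exists L, forall v, pball p u L v -> forall j, pdvd p (Nb j) (v j - b j).
Proof.
move=> ub; exists (\max_j Nb j) => v uv j; rewrite -[v j](subrK (u j)) -addrA.
by apply/pdvdD/ub/(pdvdW _ (uv j)); apply: leq_bigmax.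
Qed.

Definition poly_of_code (K : fieldType) (f : nat -> K) n (l : seq ('X_{1..n} * nat)) :
  {mpoly K[n]} := \sum_(x <- l) f x.2 *: 'X_[x.1].

Lemma exists_code (K : fieldType) (f : nat -> K) n (P : {mpoly K[n]}) :
  (forall mo, exists k, f k = P@_mo) -> exists l, poly_of_code f l = P.
Proof.
move=> f_onto; rewrite [X in exists l, _ = X]mpolyE.
elim: (msupp P) => [|mo r [l IHl]]; first by exists [::]; rewrite /poly_of_code !big_nil.
have [k fk] := f_onto mo; exists ((mo, k) :: l).
by rewrite /poly_of_code !big_cons -IHl fk.
Qed.

(* A code for a tuple of jet variables together with a polynomial whose coefficients are
   given by their indices in the enumeration f; codes form a countable type. *)
Definition jet_code m := {n : nat & n.-tuple (nat * 'I_m) * seq ('X_{1..n} * nat)}%type.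

Section ZeroSets.
Variables (p : nat) (R : idomainType) (K : fieldType) (iota : {rmorphism R -> K})
  (phi : {rmorphism R -> R}) (delta : R -> R) (m : nat) (f : nat -> K).
Hypotheses (p_pr : prime p) (dvrR : dvr_with_uniformizer R p)
  (resR : residue_alg_closed R p) (frobR : frobenius_lift p phi)
  (deltaE : forall a, p%:R * delta a = phi a - a ^+ p) (fracK : fraction_field_of iota).

Definition jet_zero_set n (s : n.-tuple (nat * 'I_m)) (P : {mpoly K[n]}) : subset_of R m :=
  fun u => [/\ uniq s, P != 0 & P.@[delta_jet iota delta s u] = 0].

Definition code_zero_set (k : nat) : subset_of R m := fun u =>
  if @unpickle (jet_code m) k is Some c then
    jet_zero_set (tagged c).1 (poly_of_code f (tagged c).2) u
  else False.

Lemma jet_zero_set_compl_dense n (s : n.-tuple (nat * 'I_m)) P u L :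
  exists v, pball p u L v /\ ~ jet_zero_set s P v.
Proof.
case: (boolP (uniq s && (P != 0))) => [/andP[uniq_s P_neq0]|bad]; last first.
  by exists u; split=> [|[uniq_s P_neq0 _]]; [apply: pball_refl | case/negP: bad; apply/andP].
have [N [s' [G [uniq_s' PG /(_ uniq_s P_neq0) G_neq0]]]] :=
  exists_phi_jet_poly dvrR fracK.1 deltaE s P.
have [v [uv Gv]] := phi_jet_poly_nonzero_near p_pr dvrR resR frobR fracK.1 uniq_s' G_neq0 u L.
by exists v; split => // -[_ _]; rewrite PG; apply/eqP.
Qed.

Lemma jet_zero_set_compl_open n (s : n.-tuple (nat * 'I_m)) P v : ~ jet_zero_set s P v ->
  exists e, forall w, pball p v e w -> ~ jet_zero_set s P w.
Proof.
case: (boolP (uniq s && (P != 0))) => [/andP[uniq_s P_neq0]|bad] not_zero; last first.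
  by exists 0%N => w _ [uniq_s P_neq0 _]; case/negP: bad; apply/andP.
have : P.@[delta_jet iota delta s v] != 0 by apply/eqP => Pv0; apply: not_zero.
move=> /(delta_jet_poly_nonzero_open dvrR fracK deltaE)[e Pe].
by exists e => w vw [_ _]; apply/eqP/Pe.
Qed.

Lemma code_zero_set_nowhere_dense (X : subset_of R m) k :
  (forall u, X u -> exists L, forall v, pball p u L v -> X v) ->
  forall u, ~ interior_in p X (closure_in p X (fun v => X v /\ code_zero_set k v)) u.
Proof.
rewrite /code_zero_set => X_open; case: unpickle => [c|]; apply: interior_closure_empty => //.
- exact: jet_zero_set_compl_dense.
- exact: jet_zero_set_compl_open.
- by move=> u L; exists u; split=> //; apply: pball_refl.
- by move=> v _; exists 0%N => w _ [].
Qed.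

End ZeroSets.

Unset Implicit Arguments.

Theorem lemma3p11 (p : nat) (R : idomainType) (K : fieldType)
    (iota : {rmorphism R -> K}) (phi : {rmorphism R -> R}) (delta : R -> R)
    (E : pred K) (m : nat) (b : 'I_m -> R) (Nb : 'I_m -> nat) :
  prime p -> odd p ->
  is_W_Fpbar R p ->
  frobenius_lift p phi ->
  (forall a : R, p%:R * delta a = phi a - a ^+ p) ->
  fraction_field_of iota ->
  countable_subfield E ->
  let X : subset_of R m := fun u => forall j, pdvd p (Nb j) (u j - b j) in
  exists Om : subset_of R m,
    first_category_in p X Om /\
    forall u : pt R m, X u -> ~ Om u ->
      alg_indep_over E (fun ij : nat * 'I_m => iota (iter ij.1 delta (u ij.2))).
Proof.
move=> p_pr _ [dvrR _ resR _] frobR deltaE fracK [_ [f f_onto]] X.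
pose Z := @code_zero_set R K iota delta m f.
exists (fun u => exists k, X u /\ Z k u); split.
  exists (fun k u => X u /\ Z k u); split; first by move=> k u [].
  split=> // k; apply: (code_zero_set_nowhere_dense p_pr dvrR resR frobR deltaE fracK).
  exact: box_open.
move=> u Xu not_Om n s uniq_s P P_E Pu0; apply: NNPP => /eqP P_neq0; apply: not_Om.
have [l Pl] := exists_code (fun mo => f_onto _ (P_E mo)).
exists (pickle (Tagged _ (s, l) : jet_code m)); split=> //.
by rewrite /Z /code_zero_set pickleK /= Pl.
Qed.
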